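(* Fix an integer $q\ge 2$. There is a constant $C>0$ depending only on $q$ such that for every $\varepsilon\in(0,1/C)$ there exists $n_0$ with the following property. Let $n\ge n_0$, let $t$ be a positive integer with $t\le 10\sqrt{n}$, and let $S\subseteq[q]^n$ satisfy $\Delta(G[S])\le n^5$. Let \[ S_1 = \left\{ v\in S : \deg_k(v) \le \varepsilon n^{\lceil k/2\rceil/2} \text{ for each }k=1,\dots,20\right\}. \] Then $|S_1|\le (1 + C\varepsilon)H_q(n,t)$.
   Context: $d$ is the Hamming distance on $[q]^n$. $V_q(n,r) = \sum_{i=0}^{r}\binom{n}{i}(q-1)^i$ and $H_q(n,t) = q^n / V_q(n,t)$. $G = G_{q,n,t}$ is the graph with vertex set $[q]^n$ in which two distinct vertices are adjacent iff their Hamming distance is at most $2t$; $G[S]$ is its induced subgraph on $S$ and $\Delta(\cdot)$ is the maximum degree. For $v\in S$ and $k\ge1$, $\deg_k(v)=|\{u\in S : d(u,v)=k\}|$. *)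

From HB Require Import structures.
From mathcomp Require Import all_boot all_order all_algebra.
From mathcomp Require Import reals.
Set Implicit Arguments. Unset Strict Implicit. Unset Printing Implicit Defensive.
Import Order.TTheory GRing.Theory Num.Theory.

Definition word (q n : nat) := {ffun 'I_n -> 'I_q}.

Definition hamming (q n : nat) (x y : word q n) : nat :=
  #|[set i : 'I_n | x i != y i]|.

Definition Vq (q n r : nat) : nat := \sum_(i < r.+1) 'C(n, i) * (q - 1) ^ i.

Definition Hq (R : realType) (q n t : nat) : R :=
  ((q ^ n)%:R / (Vq q n t)%:R)%R.

Definition adjG (q n t : nat) (x y : word q n) : bool :=
  (x != y) && (hamming x y <= 2 * t).

Definition degG (q n t : nat) (S : {set word q n}) (v : word q n) : nat :=
  #|[set u in S | adjG t v u]|.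

(* maximum degree Delta(G[S]) (0 for empty S) *)
Definition maxdegG (q n t : nat) (S : {set word q n}) : nat :=
  \max_(v in S) degG t S v.

Definition degk (q n : nat) (S : {set word q n}) (k : nat) (v : word q n) : nat :=
  #|[set u in S | hamming u v == k]|.

Definition ceil_half (k : nat) : nat := (k.+1)./2.

(* S_1 = { v in S : deg_k(v) <= eps * n^{ceil(k/2)/2} for k = 1..20 } ;
   n^{m/2} is written (sqrt n)^m *)
Definition S1 (R : realType) (q n : nat) (eps : R) (S : {set word q n})
  : {set word q n} :=
  [set v in S | [forall k : 'I_21, (0 < (k : nat))%N ==>
     ((degk S k v)%:R <= eps * (Num.sqrt (n%:R : R)) ^+ ceil_half k)%R]].

From HB Require Import structures.
From mathcomp Require Import all_boot all_order all_algebra.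
From mathcomp Require Import reals.
From mathcomp Require Import zify ring lra.
Import Order.TTheory GRing.Theory Num.Theory.
Set Implicit Arguments. Unset Strict Implicit. Unset Printing Implicit Defensive.

(* The radius-t balls around the points of S1 almost pack [q]^n.  Double
   counting gives |S1| V(t) <= q^n + sum over ordered pairs u <> v of S1 of
   |B(u) :&: B(v)|.  If d(u,v) = d, a common point differs from u in at most
   t - ceil(d/2) of the coordinates where u and v agree, so the intersection
   has at most q^d V(t - ceil(d/2)) points; together with
   V(t - h) (n - t)^h <= t^h V(t) and t <= 10 sqrt n this is at most
   (20 q^2 / sqrt n)^ceil(d/2) V(t).  For u in S1 the neighbours at distance
   at most 20 then contribute O(eps) V(t) by the bounds on deg_k(u), and the
   others, at most n^5 of them by the degree bound, contribute
   n^5 (20 q^2 / sqrt n)^11 V(t) = O(1 / sqrt n) V(t). *)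

Section DoubleCounting.
Variables (I T : finType).

Lemma sum_card_le_card_add_overlaps (A : {set I}) (B : I -> {set T}) :
  (\sum_(u in A) #|B u|
     <= #|T| + \sum_(u in A) \sum_(v in A | v != u) #|B u :&: B v|)%N.
Proof.
have cardE (C : {set T}) : #|C| = (\sum_x (x \in C))%N.
  by rewrite -sum1_card big_mkcond.
rewrite -sum1_card (eq_bigr _ (fun u _ => cardE (B u))) exchange_big /=.
under [X in (_ <= _ + X)%N]eq_bigr do
  rewrite (eq_bigr _ (fun v _ => cardE (B _ :&: B v))) exchange_big /=.
rewrite [X in (_ <= _ + X)%N]exchange_big -big_split /=.
apply: leq_sum => x _.
case: (pickP [pred u | (u \in A) && (x \in B u)]) => [u0 /andP [Au0 Bu0] | none].
  rewrite (bigD1 u0 Au0) [X in (_ <= _ + X)%N](bigD1 u0 Au0) /= Bu0 leq_add2l.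
  by apply: leq_trans (leq_addr _ _); apply: leq_sum => v _; rewrite inE Bu0.
by rewrite big1 // => u Au; move: (none u); rewrite /= Au /= => ->.
Qed.

End DoubleCounting.

Lemma ceil_half_bounds (d : nat) : (d <= 2 * ceil_half d <= d.+1)%N.
Proof. by rewrite /ceil_half; have := odd_double_half d.+1; case: odd => /=; lia. Qed.

Section HammingBalls.
Variables q n : nat.
Local Notation W := (word q n).

Definition diffset (x y : W) : {set 'I_n} := [set i | x i != y i].

Definition ball (t : nat) (u : W) : {set W} := [set x | hamming x u <= t].

Definition sphere_size (i : nat) : nat := 'C(n, i) * (q - 1) ^ i.

Lemma hammingC (x y : W) : hamming x y = hamming y x.
Proof. by apply: eq_card => i; rewrite !inE eq_sym. Qed.

Lemma hamming_eq0 (x y : W) : (hamming x y == 0) = (x == y).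
Proof.
rewrite cards_eq0; apply/eqP/eqP => [xy | ->]; last first.
  by apply/setP => i; rewrite !inE eqxx.
apply/ffunP => i; apply/eqP/negP => /negP neq.
by have := in_set0 i; rewrite -xy inE neq.
Qed.

Lemma card_diffset_eq (u : W) (E : {set 'I_n}) :
  #|[set x : W | diffset x u == E]| = (q - 1) ^ #|E|.
Proof.
pose F i := if i \in E then predC1 (u i) else pred1 (u i).
have -> : [set x : W | diffset x u == E] = [set x : W | x \in family F].
  apply/setP => x; rewrite !inE; apply/eqP/familyP => [dE i | xF].
    rewrite /F -dE inE.
    by case: (eqVneq (x i) (u i)) => [-> | ne] /=; rewrite !inE ?eqxx ?ne.
  apply/setP => i; rewrite inE; have := xF i; rewrite /F.
  by case: (i \in E); rewrite !inE // => /eqP ->; rewrite eqxx.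
rewrite cardsE card_family foldrE big_map big_enum /=.
rewrite (eq_bigr (fun i => if i \in E then q - 1 else 1)); last first.
  by move=> i _; rewrite /F; case: (i \in E); rewrite ?cardC1 ?card_ord ?subn1 ?card1.
by rewrite -big_mkcond prod_nat_const.
Qed.

Lemma card_sphere (u : W) (i : nat) :
  #|[set x : W | hamming x u == i]| = sphere_size i.
Proof.
rewrite -sum1_card (partition_big (diffset^~ u) (fun E => #|E| == i)) /=;
  last by move=> x; rewrite inE.
rewrite (eq_bigr (fun _ => (q - 1) ^ i)); last first.
  move=> E /eqP <-; rewrite -(card_diffset_eq u) -sum1_card.
  apply: eq_bigl => x; rewrite !inE andb_idl // => /eqP <-.
  by rewrite /hamming.
rewrite big_const iter_addn_0 mulnC /sphere_size; congr (_ * _).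
by rewrite -[n in 'C(n, _)]card_ord -card_draws; apply: eq_card => E; rewrite inE.
Qed.

Lemma card_ball (t : nat) (u : W) : #|ball t u| = Vq q n t.
Proof.
elim: t => [|t IH].
  rewrite /Vq big_ord1 -/(sphere_size 0) -(card_sphere u 0).
  by apply: eq_card => x; rewrite !inE leqn0.
rewrite /Vq big_ord_recr /= -/(Vq q n t) -/(sphere_size t.+1) -IH -(card_sphere u t.+1).
rewrite -(cardsID (ball t u) (ball t.+1 u)); congr (_ + _); apply: eq_card => x; rewrite !inE.
  by rewrite andb_idl // => /leqW.
by rewrite -ltnNge eqn_leq andbC.
Qed.

Lemma ballI_double_diffsetD (t : nat) (u v x : W) :
  x \in ball t u -> x \in ball t v ->
  (2 * #|diffset x u :\: diffset u v| + hamming u v <= 2 * t)%N.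
Proof.
rewrite !inE => xu xv.
have splitu := cardsID (diffset u v) (diffset x u).
have splitv := cardsID (diffset u v) (diffset x v).
have sameD : diffset x u :\: diffset u v = diffset x v :\: diffset u v.
  by apply/setP => i; rewrite !inE; case: (eqVneq (u i) (v i)) => [-> |].
have coverD : (#|diffset u v|
    <= #|diffset x u :&: diffset u v| + #|diffset x v :&: diffset u v|)%N.
  rewrite -cardsUI; apply: leq_trans (leq_addr _ _); apply: subset_leq_card.
  apply/subsetP => i; rewrite !inE => uv; rewrite uv !andbT.
  by case: (eqVneq (x i) (u i)) => // ->.
have {}xu : (#|diffset x u| <= t)%N := xu.
have {}xv : (#|diffset x v| <= t)%N := xv.
have -> : hamming u v = #|diffset u v| by [].
rewrite sameD in splitu *; lia.
Qed.

Lemma ballI_eq0 (t : nat) (u v : W) : (2 * t < hamming u v)%N ->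
  ball t u :&: ball t v = set0.
Proof.
move=> far; apply/setP => x; rewrite !inE; apply/negbTE/andP => -[xu xv].
have := @ballI_double_diffsetD t u v x; rewrite !inE => /(_ xu xv); lia.
Qed.

Lemma card_ballI_le (t : nat) (u v : W) :
  (#|ball t u :&: ball t v|
     <= q ^ hamming u v * Vq q n (t - ceil_half (hamming u v)))%N.
Proof.
pose D := diffset u v.
pose outside (x : W) : W := [ffun i => if i \in D then u i else x i].
pose inside (x : W) : W := [ffun i => if i \in D then x i else u i].
pose F := family (fun i => if i \in D then predT else pred1 (u i)).
have split_inj : injective (fun x => (outside x, inside x)).
  move=> x y [/ffunP eo /ffunP ei]; apply/ffunP => i.
  by have := eo i; have := ei i; rewrite !ffunE; case: (i \in D).
rewrite -(card_imset _ split_inj).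
have sub : [set (outside x, inside x) | x in ball t u :&: ball t v]
    \subset setX (ball (t - ceil_half (hamming u v)) u) [set y | y \in F].
  apply/subsetP => _ /imsetP [x /setIP [xu xv] ->]; rewrite !inE.
  apply/andP; split; last first.
    by apply/familyP => i; rewrite ffunE; case: (i \in D); rewrite //= inE.
  have -> : hamming (outside x) u = #|diffset x u :\: D|.
    apply: eq_card => i; rewrite !inE ffunE.
    by rewrite inE; case: (u i != v i); rewrite ?eqxx.
  have := ballI_double_diffsetD xu xv; have := ceil_half_bounds (hamming u v).
  rewrite -/D; lia.
apply: leq_trans (subset_leq_card sub) _.
rewrite cardsX card_ball mulnC leq_mul2r; apply/orP; right.
rewrite cardsE card_family foldrE big_map big_enum /=.
rewrite (eq_bigr (fun i => if i \in D then q else 1)); last first.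
  by move=> i _; case: (i \in D); rewrite ?card1 // card_ord.
by rewrite -big_mkcond prod_nat_const.
Qed.

Lemma sum_near_degk (V : nmodType) (m : nat) (S : {set W}) (u : W)
    (F : nat -> V) :
  (\sum_(v in S | (v != u) && (hamming u v <= m)%N) F (hamming u v)
    = \sum_(k < m.+1 | (0 < k)%N) F k *+ degk S k u)%R.
Proof.
rewrite (partition_big (fun v => inord (hamming u v) : 'I_m.+1)
                       (fun k : 'I_m.+1 => 0 < k)%N) /=; last first.
  move=> v /and3P [_ vu near]; rewrite inordK ?ltnS //.
  by rewrite lt0n hamming_eq0 eq_sym.
apply: eq_bigr => k k0.
rewrite (eq_bigr (fun _ => F k)) => [|v /andP [/and3P [_ _ near] /eqP <-]];
  last by rewrite inordK.
rewrite sumr_const; congr (_ *+ _)%R; apply: eq_card => v; rewrite !inE hammingC.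
apply/andP/andP => [[/and3P [-> _ near] /eqP <-] | [vS /eqP dk]].
  by rewrite inordK ?ltnS.
have km := ltn_ord k; rewrite -dk in k0 km *; rewrite vS /= -ltnS km.
split; last by apply/eqP/val_inj; rewrite /= inordK.
by rewrite andbT; apply: contraTneq k0 => ->; rewrite lt0n hamming_eq0 negbK.
Qed.

Hypothesis q_gt1 : (1 < q)%N.

Lemma sphere_size_ratio (t i : nat) : (i < t)%N ->
  (sphere_size i * (n - t) <= sphere_size i.+1 * t)%N.
Proof.
move=> it; have binS := mul_bin_left n i.
rewrite /sphere_size expnS.
set c0 := 'C(n, i) in binS *; set c1 := 'C(n, i.+1) in binS *.
set p := (q - 1) ^ i; set Q := q - 1.
apply: (@leq_trans (c0 * p * ((n - i) * Q))); first by rewrite leq_mul2l; nia.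
apply: (@leq_trans (c1 * (Q * p) * i.+1)); last by rewrite leq_mul2l it orbT.
have -> : (c0 * p * ((n - i) * Q) = ((n - i) * c0) * p * Q)%N by ring.
by rewrite -binS; have -> : (c1 * (Q * p) * i.+1 = (i.+1 * c1) * p * Q)%N by ring.
Qed.

Lemma sphere_size_ratio_iter (t i h : nat) : (i + h <= t)%N ->
  (sphere_size i * (n - t) ^ h <= sphere_size (i + h) * t ^ h)%N.
Proof.
elim: h => [|h IH] iht; first by rewrite addn0.
have step := @sphere_size_ratio t (i + h) ltac:(lia).
have := IH ltac:(lia); rewrite addnS !expnS; nia.
Qed.

Lemma Vq_ratio (t h : nat) : (h <= t)%N ->
  ((n - t) ^ h * Vq q n (t - h) <= t ^ h * Vq q n t)%N.
Proof.
move=> ht; rewrite /Vq big_distrr /=.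
apply: (@leq_trans (\sum_(i < (t - h).+1) sphere_size (i + h) * t ^ h)).
  apply: leq_sum => i _; rewrite mulnC; apply: sphere_size_ratio_iter.
  by have := ltn_ord i; lia.
rewrite -big_distrl /= mulnC leq_mul2l; apply/orP; right.
have -> : (\sum_(i < (t - h).+1) sphere_size (i + h)
           = \sum_(h <= i < t.+1) sphere_size i)%N.
  by rewrite -(big_mkord xpredT (fun i => sphere_size (i + h))) -[in RHS](add0n h) big_addn subSn.
rewrite (_ : \sum_(i < t.+1) _ = \sum_(0 <= i < t.+1) sphere_size i)%N;
  last by rewrite big_mkord.
rewrite [X in (_ <= X)%N](@big_cat_nat _ _ _ h) //=; last by lia.
exact: leq_addl.
Qed.

Lemma card_ballI_mul_le (t : nat) (u v : W) :
  (#|ball t u :&: ball t v| * (n - t) ^ ceil_half (hamming u v)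
     <= (q ^ 2 * t) ^ ceil_half (hamming u v) * Vq q n t)%N.
Proof.
set d := hamming u v; set h := ceil_half d.
have [far | near] := ltnP (2 * t) d; first by rewrite ballI_eq0 // cards0.
have hd := ceil_half_bounds d.
apply: (@leq_trans (q ^ d * Vq q n (t - h) * (n - t) ^ h)).
  by rewrite leq_mul2r card_ballI_le orbT.
rewrite -mulnA (mulnC (Vq _ _ _)) expnMn -expnM -mulnA.
apply: leq_mul; first by rewrite leq_pexp2l //; lia.
by apply: Vq_ratio; lia.
Qed.

End HammingBalls.

Local Open Scope ring_scope.

Section Overlaps.
Variables (R : realType) (q n t : nat).
Let s : R := Num.sqrt n%:R.
Let b : R := (20 * q ^ 2)%:R.
Let V : R := (Vq q n t)%:R.
Hypothesis q_gt1 : (1 < q)%N.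
Hypothesis t_le : t%:R <= 10 * s.
Hypothesis b_le_s : b <= s.

Let b_ge20 : 20 <= b. Proof. by rewrite /b ler_nat; nia. Qed.
Let b_ge1 : 1 <= b. Proof. by rewrite /b ler1n; nia. Qed.
Let s_gt0 : 0 < s. Proof. by apply: lt_le_trans b_le_s; apply: lt_le_trans b_ge20. Qed.
Let sqr_s : s ^+ 2 = n%:R. Proof. by rewrite sqr_sqrtr ?ler0n. Qed.
Let ratio_ge0 : 0 <= b / s. Proof. by rewrite divr_ge0 ?ler0n ?ltW. Qed.
Let ratio_le1 : b / s <= 1. Proof. by rewrite ler_pdivrMr // mul1r. Qed.

Let twice_t_le_n : (2 * t <= n)%N.
Proof.
rewrite -(ler_nat R) natrM -sqr_s.
by have := t_le; have := b_le_s; have := b_ge20; nra.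
Qed.

Let t_mul_s_le : t%:R * s <= 20 * (n - t)%:R.
Proof.
have := twice_t_le_n; rewrite -(ler_nat R) natrM => tn.
rewrite natrB; last by have := twice_t_le_n; lia.
by rewrite -sqr_s in tn *; have := t_le; have := s_gt0; nra.
Qed.

Lemma card_ballI_le_pow (u v : word q n) :
  #|ball t u :&: ball t v|%:R <= (b / s) ^+ ceil_half (hamming u v) * V.
Proof.
set h := ceil_half _; set c := #|_|.
have n_gt_t : (t < n)%N.
  have : (0 < n)%N by rewrite -(ltr_nat R) -sqr_s exprn_gt0.
  by have := twice_t_le_n; lia.
have nt_gt0 : 0 < (n - t)%:R :> R by rewrite ltr0n subn_gt0.
have cmul := card_ballI_mul_le q_gt1 t u v.
have qt_le : (q ^ 2 * t)%:R <= b / s * (n - t)%:R.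
  have t_le_ratio : t%:R <= 20 * (n - t)%:R / s by rewrite ler_pdivlMr.
  rewrite natrM (_ : b / s * _ = (q ^ 2)%:R * (20 * (n - t)%:R / s)).
    by rewrite ler_wpM2l.
  by rewrite /b natrM; field; rewrite gt_eqF.
rewrite -(ler_pM2r (exprn_gt0 h nt_gt0)) mulrAC -exprMn.
apply: le_trans (_ : (q ^ 2 * t)%:R ^+ h * V <= _).
  by rewrite /V -!natrX -!natrM ler_nat.
by apply: ler_wpM2r; rewrite ?ler0n // lerXn2r // nnegrE ?ler0n // mulr_ge0.
Qed.

Lemma near_overlap_le (eps : R) (S : {set word q n}) (u : word q n) :
  0 <= eps -> u \in S1 eps S ->
  \sum_(v in S | (v != u) && (hamming u v <= 20)%N) #|ball t u :&: ball t v|%:R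
    <= 21%:R * b ^+ 10 * eps * V.
Proof.
move=> eps0 /setIdP [_ /forallP degk_le].
apply: le_trans (_ : \sum_(v in S | (v != u) && (hamming u v <= 20)%N)
    (b / s) ^+ ceil_half (hamming u v) * V <= _).
  by apply: ler_sum => v _; apply: card_ballI_le_pow.
rewrite (sum_near_degk 20 S u (fun k => (b / s) ^+ ceil_half k * V)).
apply: le_trans (_ : \sum_(k < 21) b ^+ 10 * eps * V <= _); last first.
  by rewrite sumr_const card_ord -!mulrA mulr_natl.
rewrite [X in _ <= X](bigID (fun k : 'I_21 => 0 < k)%N) /= -[X in X <= _]addr0.
apply: lerD; last by apply: sumr_ge0 => k _; rewrite !mulr_ge0 ?exprn_ge0 ?ler0n.
apply: ler_sum => k k0; have := degk_le k; rewrite k0 implyTb => degk_k.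
rewrite -mulr_natl mulrA; apply: ler_wpM2r; first exact: ler0n.
apply: le_trans (_ : eps * s ^+ ceil_half k * (b / s) ^+ ceil_half k <= _).
  by apply: ler_wpM2r; rewrite ?exprn_ge0.
rewrite -mulrA -exprMn mulrCA divff ?gt_eqF // mulr1 mulrC ler_wpM2r //.
apply: ler_weXn2l => //.
by have := ceil_half_bounds k; have := ltn_ord k; lia.
Qed.

Lemma far_overlap_le (S : {set word q n}) (u : word q n) :
  \sum_(v in S | (v != u) && (20 < hamming u v)%N) #|ball t u :&: ball t v|%:R
    <= (degG t S u)%:R * (b / s) ^+ 11 * V.
Proof.
apply: le_trans (_ : \sum_(v in [set w in S | adjG t u w]) (b / s) ^+ 11 * V <= _);
  last by rewrite sumr_const -mulrA mulr_natl.
rewrite [X in X <= _]big_mkcond [X in _ <= X]big_mkcond; apply: ler_sum => v _.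
rewrite inE /adjG; case: (v \in S) => //=.
have ge0 : 0 <= (b / s) ^+ 11 * V by rewrite mulr_ge0 ?exprn_ge0.
case: (eqVneq u v) => [-> | _] /=; first exact: lexx.
case: ltnP => [far | _]; last by case: ifP.
case: (leqP (hamming u v) (2 * t)) => [near | farther] /=.
  apply: le_trans (card_ballI_le_pow u v) _; apply: ler_wpM2r; first exact: ler0n.
  by apply: ler_wiXn2l => //; have := ceil_half_bounds (hamming u v); lia.
by rewrite ballI_eq0 // cards0.
Qed.
Lemma overlap_S1_le (eps : R) (S : {set word q n}) (u : word q n) :
  0 <= eps -> (maxdegG t S <= n ^ 5)%N -> u \in S1 eps S ->
  \sum_(v in S1 eps S | v != u) #|ball t u :&: ball t v|%:R
    <= (21%:R * b ^+ 10 * eps + b ^+ 11 / s) * V.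
Proof.
move=> eps0 maxdeg uS1.
have S1_sub : {subset S1 eps S <= S} by move=> v /setIdP [].
apply: le_trans (_ : \sum_(v in S | v != u) #|ball t u :&: ball t v|%:R <= _).
  rewrite [X in X <= _]big_mkcond [X in _ <= X]big_mkcond; apply: ler_sum => v _.
  by case: ifP => [/andP [/S1_sub -> ->] // | _]; case: ifP.
rewrite (bigID (fun v => hamming u v <= 20)%N) /= mulrDl.
rewrite !(eq_bigl _ _ (fun v => esym (andbA _ _ _))).
apply: lerD; first exact: near_overlap_le.
rewrite (eq_bigl _ _ (fun v => congr1 (andb _) (congr1 (andb _) (esym (ltnNge _ _))))).
apply: le_trans (far_overlap_le S u) _.
have -> : b ^+ 11 / s = n%:R ^+ 5 * (b / s) ^+ 11.
  by rewrite -sqr_s -exprM expr_div_n; field; rewrite gt_eqF.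
apply: ler_wpM2r => //; apply: ler_wpM2r; first exact: exprn_ge0.
rewrite -natrX ler_nat; apply: leq_trans maxdeg.
exact: (@leq_bigmax_cond _ (fun v => v \in S) (fun v => degG t S v) u (S1_sub u uS1)).
Qed.

End Overlaps.

Lemma le_1D2M_of_le_addM (R : realFieldType) (x y d : R) :
  0 <= x -> 0 <= d -> 2 * d <= 1 -> x <= y + d * x -> x <= (1 + 2 * d) * y.
Proof.
move=> x0 d0 d_le x_le.
have tail0 : 0 <= x * d * (1 - 2 * d) by rewrite !mulr_ge0 // subr_ge0.
apply: le_trans (_ : x * (1 - d) * (1 + 2 * d) <= _); first lra.
by rewrite mulrC ler_wpM2l; lra.
Qed.

Lemma card_le_Hq_of_overlap (R : realType) (q n t : nat) (A : {set word q n}) (d : R) :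
  0 <= d -> 2 * d <= 1 ->
  (forall u, u \in A ->
     \sum_(v in A | v != u) #|ball t u :&: ball t v|%:R <= d * (Vq q n t)%:R) ->
  #|A|%:R <= (1 + 2 * d) * Hq R q n t.
Proof.
move=> d0 d_le overlap; set V : R := (Vq q n t)%:R.
have V_gt0 : 0 < V by rewrite ltr0n /Vq big_ord_recl bin0 expn0.
have := sum_card_le_card_add_overlaps A (ball t).
rewrite (eq_bigr _ (fun u _ => card_ball t u)) sum_nat_const card_ffun !card_ord.
rewrite -(ler_nat R) natrD !natrM natr_sum => packing.
rewrite /Hq mulrA ler_pdivlMr //.
apply: le_1D2M_of_le_addM => //; first exact: mulr_ge0.
apply: le_trans packing _; rewrite lerD2l mulrCA mulr_natl -sumr_const.
by apply: ler_sum => u uA; rewrite natr_sum; apply: overlap.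
Qed.

Lemma nat_le_sqrt (R : realType) (m n : nat) :
  (m ^ 2 <= n)%N -> m%:R <= Num.sqrt (n%:R : R).
Proof.
move=> mn; rewrite -(ger0_norm (ler0n R m)) -sqrtr_sqr ler_sqrt //.
by rewrite -natrX ler_nat.
Qed.

Theorem lemma4p3 (R : realType) (q : nat) (hq : (2 <= q)%N) :
  exists C : R, 0 < C /\
  forall eps : R, 0 < eps -> eps < C^-1 ->
  exists n0 : nat, forall (n t : nat), (n0 <= n)%N -> (0 < t)%N ->
    (t%:R <= 10 * Num.sqrt (n%:R : R)) ->
    forall S : {set word q n}, (maxdegG t S <= n ^ 5)%N ->
    (#|S1 eps S|%:R : R) <= (1 + C * eps) * Hq R q n t.
Proof.
pose b : R := (20 * q ^ 2)%:R; pose C0 : R := 21%:R * b ^+ 10 + 1.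
have b_ge1 : 1 <= b by rewrite ler1n; nia.
have b_ge0 : 0 <= b := le_trans ler01 b_ge1.
have C0_ge1 : 1 <= C0 by rewrite lerDr mulr_ge0 ?exprn_ge0.
have C_gt0 : 0 < 2 * C0 by rewrite mulr_gt0 // (lt_le_trans ltr01 C0_ge1).
exists (2 * C0); split=> // eps eps_gt0.
rewrite -(ltr_pM2l C_gt0) mulfV ?gt_eqF // => small.
(* Large n makes the far neighbours' share b^11 / sqrt n at most eps. *)
exists (Num.Def.archi_bound (b ^+ 11 / eps) ^ 2)%N => n t n_large _ t_le S maxdeg.
set s := Num.sqrt (n%:R : R) in t_le *.
have s_ge : b ^+ 11 / eps <= s.
  apply: le_trans (nat_le_sqrt R n_large); apply: ltW; apply: archi_boundP.
  by rewrite divr_ge0 ?exprn_ge0 // ltW.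
have b_le_s : b <= s.
  apply: le_trans s_ge; rewrite ler_pdivlMr //.
  have : b <= b ^+ 11 by rewrite -{1}(expr1 b) ler_weXn2l.
  nra.
have s_gt0 : 0 < s := lt_le_trans ltr01 (le_trans b_ge1 b_le_s).
have d_le : 21%:R * b ^+ 10 * eps + b ^+ 11 / s <= C0 * eps.
  rewrite /C0 (mulrDl (21%:R * b ^+ 10) 1 eps) mul1r lerD2l.
  by rewrite ler_pdivrMr // mulrC -ler_pdivrMr.
have d_ge0 : 0 <= 21%:R * b ^+ 10 * eps + b ^+ 11 / s.
  by rewrite addr_ge0 ?mulr_ge0 ?exprn_ge0 ?invr_ge0 ?(ltW eps_gt0) ?(ltW s_gt0).
have twice_d_le1 : 2 * (21%:R * b ^+ 10 * eps + b ^+ 11 / s) <= 1 by lra.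
have overlap u := overlap_S1_le hq t_le b_le_s (ltW eps_gt0) maxdeg (u := u).
apply: le_trans (card_le_Hq_of_overlap d_ge0 twice_d_le1 overlap) _.
by apply: ler_wpM2r; [rewrite divr_ge0 ?ler0n | lra].
Qed.
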